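(* Let $G$ be a finite simple connected graph with minimum degree $\delta(G)\geq 3$. If $Z(G)=3$, then the edge connectivity of $G$ satisfies $\kappa'(G)\geq 3$.
   Context: Zero forcing: color each vertex of $G$ black or white. Color-change rule: if a black vertex $u$ has exactly one white neighbor $v$, then $v$ is recolored black ($u$ ''forces'' $v$). A set $Z\subseteq V(G)$ is a zero forcing set if, starting with exactly the vertices of $Z$ black and applying the color-change rule repeatedly until no more changes are possible, all vertices become black. The zero forcing number $Z(G)$ is the minimum size of a zero forcing set. $\kappa'(G)$ denotes the edge connectivity of $G$ (the minimum number of edges whose deletion disconnects $G$). *)

From mathcomp Require Import all_boot.
Set Implicit Arguments. Unset Strict Implicit. Unset Printing Implicit Defensive.

Section Graphs.
Variable T : finType.
Variable e : rel T.

Definition simple_graph : Prop := symmetric e /\ irreflexive e.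

Definition neighbours (v : T) : {set T} := [set u | e v u].
Definition deg (v : T) : nat := #|neighbours v|.

Definition min_deg_ge (k : nat) : Prop := forall v : T, k <= deg v.

Definition connected_graph (r : rel T) : Prop := forall x y : T, connect r x y.

(* one round of the colour-change rule, applied at every black vertex u
   having exactly one white neighbour *)
Definition force_step (B : {set T}) : {set T} :=
  B :|: [set v | [exists u, [&& u \in B, e u v, v \notin B &
                             neighbours u :\: B == [set v]]]].

(* final coloured set: iterate until stabilization (#|T| rounds suffice) *)
Definition zf_closure (Z : {set T}) : {set T} := iter #|T| force_step Z.

Definition zero_forcing_set (Z : {set T}) : bool := zf_closure Z == [set: T].

(* zero forcing number: minimum size of a zero forcing set
   ([set: T] is always one) *)
Definition zero_forcing_number : nat :=
  #|[arg min_(Z < [set: T] | zero_forcing_set Z) #|Z|]|.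

Definition edge_set : {set {set T}} :=
  [set E : {set T} | [exists x, exists y, e x y && (E == [set x; y])]].

Definition delete_edges (F : {set {set T}}) : rel T :=
  fun x y => e x y && ([set x; y] \notin F).

Definition disconnecting (F : {set {set T}}) : bool :=
  [exists x, exists y, ~~ connect (delete_edges F) x y].

(* edge connectivity: minimum number of edges whose deletion disconnects G
   (defaults to |E(G)| if no edge set disconnects, i.e. the one-vertex graph) *)
Definition edge_connectivity : nat :=
  \big[minn/#|edge_set|]_(F : {set {set T}} | (F \subset edge_set) && disconnecting F) #|F|.

End Graphs.

(* Fix a minimum zero forcing set Z, so |Z| = 3, and record for every vertex v
   outside Z the vertex f v that forces it and the round t v at which it turns
   black.  Suppose a cut between A and its complement has at most two edges.
   Inside A the forcing chains break into segments, each starting at a vertex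
   of Z or at an entry of A (a vertex forced from outside A).  Minimum degree 3
   applied to the first vertex of A forcing inside A and to the last vertex of
   A to turn black shows that A has at least two segments, with equality only
   if one cut edge leaves from each of these two vertices.  Each force across
   the cut uses a cut edge, so the two sides have at most 3 + 2 = 5 segments
   together and one side has exactly two.  Following the forcing times around
   the two cut edges, or using that Z spans a star, then gives a
   contradiction. *)

From mathcomp Require Import all_boot zify.
Set Implicit Arguments. Unset Strict Implicit. Unset Printing Implicit Defensive.

Section EdgeCuts.
Variables (T : finType) (e : rel T).
Local Notation N := (neighbours e).

Definition edge_cut (A : {set T}) : {set T * T} :=
  [set p | [&& p.1 \in A, p.2 \notin A & e p.1 p.2]].

Lemma in_edge_cut (A : {set T}) a b :
  ((a, b) \in edge_cut A) = [&& a \in A, b \notin A & e a b].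
Proof. by rewrite inE. Qed.

Lemma sum_out_deg (A : {set T}) : \sum_(a in A) #|N a :\: A| = #|edge_cut A|.
Proof.
rewrite -sum1_card (eq_bigl (fun p => (p.1 \in A) && ((p.2 \notin A) && e p.1 p.2))); last first.
  by move=> p; rewrite inE.
rewrite -(pair_big_dep (mem A) (fun a b => (b \notin A) && e a b) (fun _ _ => 1)) /=.
by apply: eq_bigr => a _; rewrite -sum1_card; apply: eq_bigl => b; rewrite !inE.
Qed.

Lemma out_deg2_le_cut (A : {set T}) a b : a \in A -> b \in A -> a != b ->
  #|N a :\: A| + #|N b :\: A| <= #|edge_cut A|.
Proof.
move=> aA bA ab; rewrite -sum_out_deg (bigD1 a) //= (bigD1 b) /=; last by rewrite bA eq_sym.
by rewrite addnA leq_addr.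
Qed.

Lemma edge_cut2P (A : {set T}) x x' v v' a b :
    edge_cut A = [set (x, x'); (v, v')] -> a \in A -> b \notin A -> e a b ->
  (a = x /\ b = x') \/ (a = v /\ b = v').
Proof.
move=> cutE aA bA eab; have : (a, b) \in edge_cut A by rewrite in_edge_cut aA bA eab.
by rewrite cutE => /set2P[[-> ->]|[-> ->]]; [left | right].
Qed.

Lemma card_edge_cutC (A : {set T}) :
  symmetric e -> #|edge_cut (~: A)| = #|edge_cut A|.
Proof.
move=> e_sym; pose sw (p : T * T) := (p.2, p.1).
have sw_inj : injective sw by move=> [? ?] [? ?] [-> ->].
rewrite -(card_imset _ sw_inj); apply: eq_card => -[a b].
rewrite -[(a, b)]/(sw (b, a)) (mem_imset _ _ sw_inj) !in_edge_cut !inE negbK e_sym.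
by case: (a \in A); case: (b \in A).
Qed.

Lemma edge_cut_small_side k (A : {set T}) :
  irreflexive e -> min_deg_ge e k -> A != set0 -> #|edge_cut A| < k -> k < #|A|.
Proof.
move=> e_irr degk /set0Pn[a aA] small; rewrite ltnNge; apply/negP => smallA.
have out_ge s : s \in A -> k.+1 - #|A| <= #|N s :\: A|.
  move=> sA; have sub : N s \subset (A :\ s) :|: (N s :\: A).
    apply/subsetP => u; rewrite !inE => esu; case: (u \in A); rewrite ?andbT ?andbF ?orbF //.
    by apply: contraTneq esu => ->; rewrite e_irr.
  have := subset_leq_card sub; have := degk s; rewrite /deg cardsU (cardsD1 s A) sA; lia.
have : \sum_(s in A) (k.+1 - #|A|) <= #|edge_cut A|.
  by rewrite -sum_out_deg; apply: leq_sum.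
rewrite sum_nat_const.
have : 0 < #|A| by apply/card_gt0P; exists a.
move: small smallA; nia.
Qed.

End EdgeCuts.

Section EdgeConnectivity.
Variables (T : finType) (e : rel T).
Hypothesis e_irr : irreflexive e.

Lemma deg_le_card_edge_set v : deg e v <= #|edge_set e|.
Proof.
have inj_edge : {in neighbours e v &, injective (fun u => [set v; u])}.
  move=> u u' uN _ /setP/(_ u); rewrite !inE eqxx orbT => /esym/orP[/eqP uv|/eqP //].
  by move: uN; rewrite inE uv e_irr.
rewrite /deg -(card_in_imset inj_edge); apply/subset_leq_card/subsetP => _ /imsetP[u uN ->].
by rewrite inE; apply/existsP; exists v; apply/existsP; exists u; rewrite eqxx andbT -in_set.
Qed.

Lemma card_edge_cut_component (F : {set {set T}}) x :
  #|edge_cut e [set z | connect (delete_edges e F) x z]| <= #|F|.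
Proof.
set S := [set z | _].
have inj_edge : {in edge_cut e S &, injective (fun p => [set p.1; p.2])}.
  move=> [a b] [a' b']; rewrite !in_edge_cut => /and3P[aS bS _] /and3P[a'S b'S _] /= /setP eq.
  have /set2P[aa'|ab'] : a \in [set a'; b'] by rewrite -eq !inE eqxx.
    subst a'; have /set2P[ba|-> //] : b \in [set a; b'] by rewrite -eq !inE eqxx orbT.
    by rewrite ba aS in bS.
  by rewrite ab' (negbTE b'S) in aS.
rewrite -(card_in_imset inj_edge); apply/subset_leq_card/subsetP => E /imsetP[[a b]].
rewrite in_edge_cut /= => /and3P[aS bS eab] ->; apply: contraNT bS => abF.
rewrite /S !inE in aS *; apply: connect_trans aS (connect1 _).
by rewrite /delete_edges eab abF.
Qed.

Lemma edge_connectivity_ge k :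
  (exists v, k <= deg e v) ->
  (forall (S : {set T}) s s', s \in S -> s' \notin S -> k <= #|edge_cut e S|) ->
  k <= edge_connectivity e.
Proof.
move=> [v kv] cut_ge; apply: (big_ind (leq k)) => [|m n|F].
- exact: leq_trans kv (deg_le_card_edge_set v).
- by rewrite leq_min => ->.
case/andP=> _ /existsP[x /existsP[y xy]].
apply: leq_trans (card_edge_cut_component F x); apply: (cut_ge _ x y).
  by rewrite inE connect0.
by rewrite inE.
Qed.

End EdgeConnectivity.

(* [t v] is the round at which [v] turns black and [f v] the vertex forcing it. *)
Definition forcing_chronology (T : finType) (e : rel T) (Z : {set T})
    (t : T -> nat) (f : T -> T) : Prop :=
  forall v, v \notin Z ->
    [/\ e (f v) v, t (f v) < t v & forall u, e (f v) u -> u != v -> t u < t v].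

Section Chronology.
Variables (T : finType) (e : rel T) (Z : {set T}).
Local Notation black n := (iter n (force_step e) Z).

Hypothesis zfZ : zero_forcing_set e Z.

Lemma black_eventually v : exists n, v \in black n.
Proof. by exists #|T|; rewrite -[iter _ _ _]/(zf_closure e Z) (eqP zfZ) inE. Qed.

Let round v := ex_minn (black_eventually v).

Lemma black_round v : v \in black (round v).
Proof. by rewrite /round; case: ex_minnP. Qed.

Lemma round_min v n : v \in black n -> round v <= n.
Proof. by rewrite /round; case: ex_minnP => m _; apply. Qed.

Lemma round_gt0 v : v \notin Z -> 0 < round v.
Proof. by rewrite lt0n; apply: contra => /eqP r0; have := black_round v; rewrite r0. Qed.

Let forces u v := [&& u \in black (round v).-1, e u v &
                      neighbours e u :\: black (round v).-1 == [set v]].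

Lemma exists_forcer v : v \notin Z -> exists u, forces u v.
Proof.
move=> vZ; have := black_round v; rewrite -(prednK (round_gt0 vZ)) /= /force_step !inE.
case/orP=> [vB | /existsP[u /and4P[uB euv _ Nu]]]; last by exists u; apply/and3P.
by have := round_min vB; rewrite -ltnS prednK ?round_gt0 // ltnn.
Qed.

Lemma zero_forcing_chronology : exists t f, forcing_chronology e Z t f.
Proof.
pose f v := if [pick u | forces u v] is Some u then u else v.
have forces_f v : v \notin Z -> forces (f v) v.
  move=> /exists_forcer[u uv]; rewrite /f; case: pickP => [// | /(_ u)].
  by rewrite uv.
exists round, f => v vZ; have /and3P[fB efv /eqP Nf] := forces_f v vZ.
have before u : u \in black (round v).-1 -> round u < round v.
  by move/round_min; rewrite -ltnS prednK ?round_gt0.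
split=> // [|u efu uv]; first exact: before.
apply: before; apply: contraTT uv => uB.
by rewrite negbK -in_set1 -Nf !inE uB.
Qed.

End Chronology.

Lemma zero_forcing_setT (T : finType) (e : rel T) : zero_forcing_set e [set: T].
Proof.
apply/eqP; rewrite /zf_closure; elim: #|T| => //= n ->.
by rewrite /force_step setTU.
Qed.

Lemma zero_forcing_number_attained (T : finType) (e : rel T) :
  exists2 Z, zero_forcing_set e Z & #|Z| = zero_forcing_number e.
Proof.
rewrite /zero_forcing_number.
by case: (arg_minnP _ (zero_forcing_setT e)) => Z zfZ _; exists Z.
Qed.

Section SmallCuts.
Variables (T : finType) (e : rel T).
Hypotheses (e_sym : symmetric e) (e_irr : irreflexive e) (deg3 : min_deg_ge e 3).
Variables (Z : {set T}) (t : T -> nat) (f : T -> T).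
Hypotheses (chron : forcing_chronology e Z t f) (cardZ : #|Z| = 3).
Local Notation N := (neighbours e).
Local Notation cut := (edge_cut e).
Implicit Types A : {set T}.

Lemma forcer_adj v : v \notin Z -> e (f v) v.
Proof. by case/chron. Qed.

Lemma forcer_earlier v : v \notin Z -> t (f v) < t v.
Proof. by case/chron. Qed.

Lemma forcer_nbr_earlier v u : v \notin Z -> e (f v) u -> u != v -> t u < t v.
Proof. by case/chron=> _ _; apply. Qed.

Lemma forcer_inj : {in ~: Z &, injective f}.
Proof.
move=> a b; rewrite !inE => aZ bZ fab; apply/eqP; apply: contraT => ab.
have ba : t b < t a by apply: forcer_nbr_earlier; rewrite ?fab ?forcer_adj // eq_sym.
have ab' : t a < t b by apply: forcer_nbr_earlier; rewrite -?fab ?forcer_adj.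
by have := ltn_trans ba ab'; rewrite ltnn.
Qed.

Definition entries (A : {set T}) := [set n in A | (n \notin Z) && (f n \notin A)].
Definition internal (A : {set T}) := [set n in A | (n \notin Z) && (f n \in A)].
Definition exits (A : {set T}) := f @: entries (~: A).
Definition terminals := ~: (f @: ~: Z).
(* Each segment of a forcing chain inside A starts at a vertex of Z or at an
   entry, and ends at a terminal or at an exit (segments_ends). *)
Definition segments (A : {set T}) := #|Z :&: A| + #|entries A|.

Lemma in_entries A n : (n \in entries A) = [&& n \in A, n \notin Z & f n \notin A].
Proof. by rewrite inE. Qed.

Lemma in_internal A n : (n \in internal A) = [&& n \in A, n \notin Z & f n \in A].
Proof. by rewrite inE. Qed.

Lemma mem_exits A y : y \notin A -> y \notin Z -> f y \in A -> f y \in exits A.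
Proof. by move=> yA yZ fyA; apply: imset_f; rewrite in_entries !inE yA yZ negbK. Qed.

Lemma card_exits A : #|exits A| = #|entries (~: A)|.
Proof.
apply: card_in_imset => a b; rewrite !in_entries => /and3P[_ aZ _] /and3P[_ bZ _].
by apply: forcer_inj; rewrite inE.
Qed.

Lemma card_split_entries A : #|A| = #|Z :&: A| + #|internal A| + #|entries A|.
Proof.
rewrite -addnA -(cardsID Z A) setIC; congr (_ + _).
rewrite -(cardsID [set n | f n \in A] (A :\: Z)); congr (_ + _); apply: eq_card => n;
by rewrite !inE; case: (n \in A); case: (n \in Z); case: (f n \in A).
Qed.

Lemma card_split_exits A : #|A| = #|terminals :&: A| + #|internal A| + #|exits A|.
Proof.
have int_inj : {in internal A &, injective f}.
  move=> a b; rewrite !in_internal => /and3P[_ aZ _] /and3P[_ bZ _].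
  by apply: forcer_inj; rewrite inE.
have disj : f @: internal A :&: exits A = set0.
  apply/setP=> u; rewrite !inE; apply/negP=> /andP[/imsetP[a aI ->] /imsetP[b bE fab]].
  move: aI bE; rewrite in_internal in_entries inE => /and3P[aA aZ _] /and3P[bA bZ _].
  by move: bA; rewrite -(forcer_inj _ _ fab) ?inE ?aA.
have split : A :\: terminals = f @: internal A :|: exits A.
  apply/setP=> u; rewrite /terminals !inE negbK; apply/andP/orP.
    case=> /imsetP[w]; rewrite inE => wZ -> fwA; case wA: (w \in A); [left | right].
      by apply: imset_f; rewrite in_internal wA wZ.
    by apply: mem_exits; rewrite ?wA.
  case=> /imsetP[w].
    by rewrite in_internal => /and3P[_ wZ fwA] ->; split; [apply: imset_f; rewrite inE|].
  rewrite in_entries !inE negbK => /and3P[_ wZ fwA] ->.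
  by split; [apply: imset_f; rewrite inE|].
rewrite -addnA -(cardsID terminals A) setIC split cardsU disj cards0 subn0.
by rewrite card_in_imset.
Qed.

Lemma segments_ends A : segments A = #|terminals :&: A| + #|exits A|.
Proof. by have := card_split_entries A; rewrite card_split_exits /segments; lia. Qed.

Lemma segments_compl A :
  segments A + segments (~: A) = 3 + #|entries A| + #|entries (~: A)|.
Proof. by rewrite /segments -cardZ -(cardsID A Z) setDE; lia. Qed.

Lemma card_entries_le_cut A : #|entries A| + #|entries (~: A)| <= #|cut A|.
Proof.
pose P := [set (n, f n) | n in entries A].
pose Q := [set (f y, y) | y in entries (~: A)].
have disj : P :&: Q = set0.
  apply/setP=> u; rewrite !inE; apply/negP => /andP[/imsetP[n nE ->] /imsetP[y yE [e1 e2]]].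
  move: nE yE; rewrite !in_entries => /and3P[_ nZ _] /and3P[_ yZ _].
  have := forcer_earlier nZ; rewrite e2 e1 => /ltn_trans/(_ (forcer_earlier yZ)).
  by rewrite ltnn.
rewrite -(card_imset _ (_ : injective (fun n => (n, f n)))); last by move=> ? ? [].
rewrite -(card_imset _ (_ : injective (fun y => (f y, y)))); last by move=> ? ? [].
rewrite -/P -/Q -cardsUI disj cards0 addn0; apply/subset_leq_card/subsetP => p.
rewrite inE => /orP[] /imsetP[w]; rewrite in_entries ?inE ?negbK => /and3P[wA wZ fwA] -> /=.
  by rewrite wA fwA e_sym forcer_adj.
by rewrite fwA wA forcer_adj.
Qed.

(* The neighbours of [f y] in A other than [y] are black before [y], so they
   are in Z or are entries of A. *)
Lemma segments_first_forcer A y : y \notin Z -> f y \in A ->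
    (forall w, w \notin Z -> f w \in A -> t y <= t w) ->
  3 <= segments A + #|(N (f y) :\: A) :\ y|.
Proof.
move=> yZ fyA ymin; set x := f y in fyA *.
set S := (Z :&: A) :|: entries A.
have cardS : #|S| <= segments A by rewrite cardsU /segments leq_subr.
have later_forcer n : n \notin Z -> t n < t y -> f n \notin A.
  by move=> nZ ny; apply: contraTN ny => fnA; rewrite -leqNgt ymin.
have xS : x \in S.
  rewrite !inE fyA /=; case: (boolP (x \in Z)) => //= xZ.
  exact: later_forcer xZ (forcer_earlier yZ).
have sub : N x \subset [set y] :|: (S :\ x) :|: ((N x :\: A) :\ y).
  apply/subsetP => n; rewrite !inE => exn.
  have [-> | ny] := eqVneq n y; rewrite ?eqxx //= exn andbT.
  case: (boolP (n \in A)) => nA /=; last by rewrite orbT.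
  rewrite andbT orbF; apply/andP; split.
    by apply: contraTneq exn => ->; rewrite e_irr.
  case: (boolP (n \in Z)) => //= nZ.
  exact: later_forcer nZ (forcer_nbr_earlier yZ exn ny).
have := subset_leq_card sub; have := deg3 x; have := cardsD1 x S.
by clearbody S; rewrite /deg xS !cardsU cards1 /=; lia.
Qed.

(* The neighbours of [v] in A other than [f v] force no vertex of A: they are
   terminals or exits of A. *)
Lemma segments_last_vertex A v : v \in A -> v \notin Z ->
    (forall w, w \in A -> w \notin Z -> t w <= t v) ->
  3 <= segments A + #|(N v :\: A) :\ f v|.
Proof.
move=> vA vZ vmax; set S := (terminals :&: A) :|: exits A.
have cardS : #|S| <= segments A by rewrite cardsU segments_ends leq_subr.
have in_S n : n \in A -> (forall w, w \notin Z -> f w = n -> t v < t w) -> n \in S.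
  move=> nA later; rewrite in_setU in_setI nA andbT /terminals in_setC.
  case: (boolP (n \in f @: ~: Z)) => [/imsetP[w] | //]; rewrite inE => wZ nw /=.
  rewrite nw; apply: mem_exits => //; last by rewrite -nw.
  by apply: contraTN (later w wZ (esym nw)) => wA; rewrite -leqNgt vmax.
clearbody S.
have vS : v \in S by apply: in_S => // w wZ fwv; rewrite -fwv; apply: forcer_earlier.
have sub : N v \subset [set f v] :|: (S :\ v) :|: ((N v :\: A) :\ f v).
  apply/subsetP => n; rewrite !inE => evn.
  have [-> | nfv] := eqVneq n (f v); rewrite ?eqxx //= evn andbT.
  case: (boolP (n \in A)) => nA /=; last by rewrite orbT.
  rewrite orbF; apply/andP; split; first by apply: contraTneq evn => ->; rewrite e_irr.
  apply: in_S => // w wZ wn; apply: forcer_nbr_earlier => //; first by rewrite wn e_sym.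
  by apply: contraNneq nfv => vw; rewrite -wn vw.
have := subset_leq_card sub; have := deg3 v; have := cardsD1 v S.
by rewrite /deg vS !cardsU cards1 /=; lia.
Qed.

(* The forcer of the first forced vertex has all its other neighbours in Z. *)
Lemma first_forcer_star w : w \notin Z -> exists2 z, z \in Z & Z :\ z \subset N z.
Proof.
move=> wZ; case: (@arg_minnP _ w (fun w => w \notin Z) t wZ) => y yZ ymin.
have fyZ : f y \in Z.
  by apply: contraT => /ymin; rewrite leqNgt forcer_earlier.
exists (f y) => //.
have sub : N (f y) :\ y \subset Z :\ f y.
  apply/subsetP => n; rewrite !inE => /andP[ny eyn].
  apply/andP; split; first by apply: contraTneq eyn => ->; rewrite e_irr.
  by apply: contraT => /ymin; rewrite leqNgt forcer_nbr_earlier.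
have yN : y \in N (f y) by rewrite inE forcer_adj.
have /eqP <- : N (f y) :\ y == Z :\ f y.
  rewrite eqEcard sub /=; have := cardsD1 (f y) Z; have := cardsD1 y (N (f y)).
  by have := deg3 (f y); rewrite /deg fyZ yN cardZ /=; lia.
exact: subsetDl.
Qed.

Lemma cut_edge_from_Z A w : w \notin Z -> Z :&: A != set0 -> Z :\: A != set0 ->
  exists2 a, a \in Z & exists b, (a, b) \in cut A.
Proof.
move=> wZ /set0Pn[z] /setIP[zZ zA] /set0Pn[b] /setDP[bZ bA].
have [x0 x0Z star] := first_forcer_star wZ.
have adj u : u \in Z -> u != x0 -> e x0 u.
  by move=> uZ ux0; have := subsetP star u; rewrite !inE ux0 uZ => /(_ isT).
case: (boolP (x0 \in A)) => x0A.
  exists x0 => //; exists b; rewrite in_edge_cut x0A bA adj //.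
  by apply: contraNneq bA => ->.
exists z => //; exists x0; rewrite in_edge_cut zA x0A e_sym adj //.
by apply: contraNneq x0A => <-.
Qed.

(* The two cut edges leave A at [x = f y], the first forcer acting inside A,
   and at [v], the last vertex of A to turn black. *)
Variant tight A : Prop :=
  Tight x x' v v' y of cut A = [set (x, x'); (v, v')] & x != v &
    y \in A & y \notin Z & f y = x & t x' < t y &
    v \notin Z & (forall w, w \in A -> w \notin Z -> t w <= t v) &
    entries A \subset [set x] & exits A \subset [set v].

Section Side.
Variables (A : {set T}) (y v : T).
Hypotheses (cutA : #|cut A| <= 2) (yZ : y \notin Z) (fyA : f y \in A).
Hypothesis ymin : forall w, w \notin Z -> f w \in A -> t y <= t w.
Hypotheses (vA : v \in A) (vZ : v \notin Z).
Hypothesis vmax : forall w, w \in A -> w \notin Z -> t w <= t v.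
Hypothesis fyv : f y != v.

Let out_bound : #|(N (f y) :\: A) :\ y| + #|(N v :\: A) :\ f v| <= 2.
Proof.
have := out_deg2_le_cut e fyA vA fyv.
have := subset_leq_card (subD1set (N (f y) :\: A) y).
by have := subset_leq_card (subD1set (N v :\: A) (f v)); lia.
Qed.

Lemma segments_ge2 : 2 <= segments A.
Proof.
have := segments_first_forcer yZ fyA ymin; have := segments_last_vertex vA vZ vmax.
by have := out_bound; lia.
Qed.

Lemma tight_of_segments2 : segments A = 2 -> tight A.
Proof.
move=> seg2; have first := segments_first_forcer yZ fyA ymin.
have last := segments_last_vertex vA vZ vmax; have := out_bound.
have [x' x'N] : exists x', x' \in (N (f y) :\: A) :\ y by apply/card_gt0P; lia.
have [v' v'N] : exists v', v' \in (N v :\: A) :\ f v by apply/card_gt0P; lia.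
move: x'N v'N; rewrite !inE => /and3P[x'y x'A ex'] /and3P[v'f v'A ev'] _.
have cutE : cut A = [set (f y, x'); (v, v')].
  apply/esym/eqP; rewrite eqEcard cards2 xpair_eqE (negbTE fyv) /= (leq_trans cutA) // andbT.
  by apply/subsetP => p /set2P[]->; rewrite in_edge_cut ?fyA ?vA ?x'A ?v'A.
have cross := edge_cut2P cutE.
have yA : y \in A.
  apply: contraT => yA; case: (cross _ _ fyA yA (forcer_adj yZ)) => -[fyv' yx'].
    by rewrite yx' eqxx in x'y.
  by move: fyv; rewrite fyv' eqxx.
have fvA : f v \in A.
  apply: contraT => fvA; case: (cross _ _ vA fvA _) => [|[vfy _]|[_ fvv']].
  - by rewrite e_sym forcer_adj.
  - by move: fyv; rewrite vfy eqxx.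
  - by rewrite fvv' eqxx in v'f.
apply: (Tight cutE fyv yA yZ erefl (forcer_nbr_earlier yZ ex' x'y) vZ vmax).
  apply/subsetP => n; rewrite in_entries inE => /and3P[nA nZ fnA].
  case: (cross _ _ nA fnA _) => [|[-> _]|[nv _]] //; first by rewrite e_sym forcer_adj.
  by rewrite nv fvA in fnA.
apply/subsetP => u /imsetP[w]; rewrite in_entries !inE negbK => /and3P[wA wZ fwA] ->.
case: (cross _ _ fwA wA (forcer_adj wZ)) => [[fwfy _]|[-> _]] //.
by rewrite (forcer_inj _ _ fwfy) ?inE ?yA in wA.
Qed.

End Side.

Lemma small_cut_side A a : a \in A -> #|cut A| <= 2 ->
  2 <= segments A /\ (segments A = 2 -> tight A).
Proof.
move=> aA cutA; case: (leqP 3 (segments A)) => [seg3 | seg2].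
  by split=> [|seg]; [exact: ltnW | rewrite seg in seg3].
have /card_gt0P[n] : 0 < #|internal A|.
  have : 3 < #|A| by apply: (edge_cut_small_side e_irr deg3) => //; apply/set0Pn; exists a.
  by have := card_split_entries A; rewrite /segments in seg2; lia.
rewrite in_internal => /and3P[nA nZ fnA].
have [y /andP[yZ fyA] ymin] :=
  @arg_minnP _ n (fun w => (w \notin Z) && (f w \in A)) t (introT andP (conj nZ fnA)).
have [v /andP[vA vZ] vmax] :=
  @arg_maxnP _ n (fun w => (w \in A) && (w \notin Z)) t (introT andP (conj nA nZ)).
have ymin' w : w \notin Z -> f w \in A -> t y <= t w by move=> wZ fwA; apply: ymin; rewrite wZ.
have vmax' w : w \in A -> w \notin Z -> t w <= t v by move=> wA wZ; apply: vmax; rewrite wA.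
have fyv : f y != v.
  apply: contraTneq (forcer_earlier yZ) => ->; rewrite -leqNgt.
  exact: leq_trans (ymin' n nZ fnA) (vmax' n nA nZ).
split; first exact: segments_ge2 ymin' vA vZ vmax' fyv.
exact: tight_of_segments2 ymin' vA vZ vmax' fyv.
Qed.

Lemma tight_compl_entry_false A : tight A -> tight (~: A) -> entries (~: A) != set0 -> False.
Proof.
case=> x x' v v' y cutA xv yA yZ fyx tx'y vZ vmax _ exitsA.
case=> x2 x2' v2 v2' y2 cutB x2v2 y2B y2Z fy2 _ v2Z v2max entriesB _.
case/set0Pn => u uB; have := uB; rewrite in_entries !inE negbK => /and3P[uA uZ fuA].
have fuv : f u = v by apply/set1P; apply: (subsetP exitsA); apply: imset_f.
have ux2 : u = x2 by apply/set1P; apply: (subsetP entriesB).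
have uv' : u = v'.
  case: (edge_cut2P cutA fuA uA (forcer_adj uZ)) => -[fux ->] //.
  by move: xv; rewrite -fux fuv eqxx.
have : (v2, v2') \in cut (~: A) by rewrite cutB !inE eqxx orbT.
rewrite in_edge_cut !inE negbK => /and3P[v2A v2'A ev2].
case: (edge_cut2P cutA v2'A v2A _) => [|[_ v2x']|[_ v2v']]; first by rewrite e_sym.
  (* the forcing times would increase along x', y, v, u = x2, y2, v2 = x' *)
  have vu : t v < t u by rewrite -fuv forcer_earlier.
  have ux' : t u < t x' by rewrite ux2 -fy2 -v2x' (leq_trans (forcer_earlier y2Z)) ?v2max.
  have := leq_ltn_trans (vmax y yA yZ) (ltn_trans vu ux').
  by move/(ltn_trans tx'y); rewrite ltnn.
by move: x2v2; rewrite v2v' -uv' ux2 eqxx.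
Qed.

Lemma tight_entry_false A : tight A -> entries A != set0 ->
  Z :&: A != set0 -> Z :\: A != set0 -> False.
Proof.
case=> x x' v v' y cutA _ _ _ _ _ vZ _ entriesA _ /set0Pn[n nE] ZA ZB.
have xZ : x \notin Z.
  by have := nE; rewrite {1}(set1P (subsetP entriesA n nE)) in_entries => /and3P[].
have [a aZ [b]] := cut_edge_from_Z vZ ZA ZB.
rewrite in_edge_cut => /and3P[aA bA eab].
case: (edge_cut2P cutA aA bA eab) => -[aE _].
  by rewrite aE (negbTE xZ) in aZ.
by rewrite aE (negbTE vZ) in aZ.
Qed.

Lemma small_cut_segments_neq2 A a b : a \in A -> b \notin A -> #|cut A| <= 2 ->
  segments A != 2.
Proof.
move=> aA bA cutA; apply/negP => /eqP segA.
have bB : b \in ~: A by rewrite inE.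
have cutB : #|cut (~: A)| <= 2 by rewrite card_edge_cutC.
have tA := (small_cut_side aA cutA).2 segA.
have [segB tB] := small_cut_side bB cutB.
have [entries1 exits1] : #|entries A| <= 1 /\ #|exits A| <= 1.
  case: tA => x _ v _ _ _ _ _ _ _ _ _ _ /subset_leq_card ent /subset_leq_card ex.
  by rewrite !cards1 in ent ex.
have compl := segments_compl A; rewrite card_exits in exits1.
have [entA0 | entA] := eqVneq (entries A) set0.
  rewrite entA0 cards0 segA in compl.
  apply: (tight_compl_entry_false tA (tB _)); last rewrite -card_gt0; lia.
have ZA := cardsID A Z.
move: segA entA; rewrite /segments -!card_gt0 => segA entA.
by apply: (tight_entry_false tA); rewrite -card_gt0; lia.
Qed.

Lemma no_small_cut A a b : a \in A -> b \notin A -> 3 <= #|cut A|.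
Proof.
move=> aA bA; rewrite leqNgt; apply/negP => cutA.
have [bB aB] : b \in ~: A /\ a \notin ~: A by rewrite !inE negbK.
have cutB : #|cut (~: A)| <= 2 by rewrite card_edge_cutC.
have [[segA _] [segB _]] := (small_cut_side aA cutA, small_cut_side bB cutB).
have := small_cut_segments_neq2 aA bA cutA; have := small_cut_segments_neq2 bB aB cutB.
by have := segments_compl A; have := card_entries_le_cut A; lia.
Qed.

End SmallCuts.

Unset Implicit Arguments.

Theorem mainTheorem1 (T : finType) (e : rel T) :
  simple_graph e -> connected_graph e -> min_deg_ge e 3 ->
  zero_forcing_number e = 3 -> 3 <= edge_connectivity e.
Proof.
move=> [e_sym e_irr] _ deg3 zf3.
have [Z zfZ cardZ] := zero_forcing_number_attained e; rewrite zf3 in cardZ.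
have [t [f chron]] := zero_forcing_chronology zfZ.
apply: (edge_connectivity_ge e_irr) => [|A a b].
  have /card_gt0P[v _] : 0 < #|Z| by rewrite cardZ.
  by exists v.
exact: (no_small_cut e_sym e_irr deg3 chron cardZ).
Qed.
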